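(* Let $f_1,\dots,f_n:\mathbb{R}^d\to\mathbb{R}$ be smooth with $e^{-f_i}$ probability densities and $\int e^{-\beta f_i}dx<\infty$ for all $\beta>0$; let $w_1,\dots,w_n>0$, $\sum_iw_i=1$, $w_{\min}=\min_iw_i$, $f=-\ln\sum_iw_ie^{-f_i}$, and for $0<\beta\le1$ let $p_\beta=e^{-\beta f}/\int e^{-\beta f}$. Fix $\beta\in(0,1]$ and suppose $Z_\beta:=\int e^{-\beta f_1}dx=\cdots=\int e^{-\beta f_n}dx$ (e.g. gaussians of equal variance). Suppose each $\tilde p_{\beta,i}=e^{-\beta f_i}/Z_\beta$ satisfies a Poincaré inequality with constant $C_\beta$. Then $p_\beta$ satisfies a Poincaré inequality with constant $\frac{2C_\beta}{w_{\min}}$ on sets of measure $\le\frac{w_{\min}^2}{2}$.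
   Context: For a probability density $p$ on $\mathbb{R}^d$, $\mathcal E_p(g)=\int\|\nabla g\|^2p\,dx$, $\operatorname{Var}_p(g)=\int g^2p-(\int gp)^2$, with $g$ locally Lipschitz and $\int g^2 p<\infty$. $p$ satisfies a Poincaré inequality with constant $C$ if $\mathcal E_p(g)\ge\frac1C\operatorname{Var}_p(g)$ for all such $g$; it satisfies one on sets of measure $\le m$ if this holds for all such $g$ with $p(\operatorname{Supp}(g))\le m$. *)

From HB Require Import structures.
From mathcomp Require Import all_boot all_order all_algebra.
From mathcomp Require Import all_classical all_reals all_analysis.
Set Implicit Arguments. Unset Strict Implicit. Unset Printing Implicit Defensive.
Import Order.TTheory GRing.Theory Num.Theory.
Import numFieldNormedType.Exports.
Local Open Scope classical_set_scope.
Local Open Scope ring_scope.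

(* R^d is 'rV[R]_d (row vectors); as a measurable space it carries its Borel
   sigma-algebra (generated by the open sets of 'rV[R]_d). *)
Definition Rd (R : realType) (d : nat) := g_sigma_algebraType (@open 'rV[R]_d).

Definition box (R : realType) d (a b : 'rV[R]_d) : set (Rd R d) :=
  [set x : 'rV[R]_d | forall i, a ord0 i <= x ord0 i <= b ord0 i].

(* lam is the Lebesgue measure on the Borel sets of R^d : it gives every
   closed box its volume (this determines it uniquely). *)
Definition is_lebesgue (R : realType) d (lam : {measure set (Rd R d) -> \bar R}) :=
  forall a b : 'rV[R]_d, (forall i, a ord0 i <= b ord0 i) ->
    lam (box a b) = (\prod_(i < d) (b ord0 i - a ord0 i))%:E.

Definition evec (R : realType) d (i : 'I_d) : 'rV[R]_d := delta_mx ord0 i.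
Definition partial (R : realType) d (i : 'I_d) (g : 'rV[R]_d -> R) (x : 'rV[R]_d) : R :=
  'D_(evec R i) g x.

Definition grad_norm2 (R : realType) d (g : 'rV[R]_d -> R) (x : 'rV[R]_d) : R :=
  \sum_(i < d) (partial i g x) ^+ 2.

Fixpoint iter_dir (R : realType) d (vs : seq 'rV[R]_d) (f : 'rV[R]_d -> R)
  : 'rV[R]_d -> R :=
  match vs with
  | [::] => f
  | v :: vs' => fun x => 'D_v (iter_dir vs' f) x
  end.
Definition smooth (R : realType) d (f : 'rV[R]_d -> R) :=
  forall (vs : seq 'rV[R]_d) (x : 'rV[R]_d), differentiable (iter_dir vs f) x.

Definition locally_lipschitz (R : realType) d (g : 'rV[R]_d -> R) :=
  forall x : 'rV[R]_d, exists r : R, exists L : R, 0 < r /\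
    forall y z, ball x r y -> ball x r z -> `|g y - g z| <= L * `|y - z|.

Definition energy (R : realType) d (lam : {measure set (Rd R d) -> \bar R})
  (p : 'rV[R]_d -> R) (g : 'rV[R]_d -> R) : \bar R :=
  (\int[lam]_x (grad_norm2 g x * p x)%:E)%E.

Definition variance (R : realType) d (lam : {measure set (Rd R d) -> \bar R})
  (p : 'rV[R]_d -> R) (g : 'rV[R]_d -> R) : \bar R :=
  (\int[lam]_x (g x ^+ 2 * p x)%:E
    - (\int[lam]_x (g x * p x)%:E) ^+ 2)%E.

Definition admissible (R : realType) d (lam : {measure set (Rd R d) -> \bar R})
  (p : 'rV[R]_d -> R) (g : 'rV[R]_d -> R) :=
  locally_lipschitz g /\ (\int[lam]_x (g x ^+ 2 * p x)%:E < +oo)%E.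

Definition supp (R : realType) d (g : 'rV[R]_d -> R) : set (Rd R d) :=
  closure [set x : 'rV[R]_d | g x != 0].

Definition dmeasure (R : realType) d (lam : {measure set (Rd R d) -> \bar R})
  (p : 'rV[R]_d -> R) (A : set (Rd R d)) : \bar R :=
  (\int[lam]_(x in A) (p x)%:E)%E.

Definition poincare (R : realType) d (lam : {measure set (Rd R d) -> \bar R})
  (p : 'rV[R]_d -> R) (C : R) :=
  forall g, admissible lam p g ->
    ((C^-1)%:E * variance lam p g <= energy lam p g)%E.

Definition poincare_small_sets (R : realType) d
  (lam : {measure set (Rd R d) -> \bar R}) (p : 'rV[R]_d -> R) (C m : R) :=
  forall g, admissible lam p g -> (dmeasure lam p (supp g) <= m%:E)%E ->
    ((C^-1)%:E * variance lam p g <= energy lam p g)%E.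

(* minimum of the weights (all weights lie in (0,1], so 1 is a neutral element) *)
Definition wmin (R : realType) n (w : 'I_n -> R) : R := \big[Num.min/1]_(i < n) w i.

Definition mixture_potential (R : realType) d n (w : 'I_n -> R)
  (fs : 'I_n -> 'rV[R]_d -> R) (x : 'rV[R]_d) : R :=
  - ln (\sum_(i < n) w i * expR (- fs i x)).

Definition tempered_density (R : realType) d (lam : {measure set (Rd R d) -> \bar R})
  (f : 'rV[R]_d -> R) (beta : R) (x : 'rV[R]_d) : R :=
  expR (- (beta * f x)) / fine (\int[lam]_y (expR (- (beta * f y)))%:E)%E.

From Pilot Require Import Defs.
From mathcomp Require Import all_boot all_order all_algebra.
From mathcomp Require Import all_classical all_reals all_analysis.
From mathcomp Require Import measurable_realfun ring lra.
Set Implicit Arguments. Unset Strict Implicit. Unset Printing Implicit Defensive.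
Import Order.TTheory GRing.Theory Num.Theory.
Import numFieldNormedType.Exports.
Local Open Scope classical_set_scope.
Local Open Scope ring_scope.

(* Put e = exp (- beta f) = (sum_i w_i exp (- f_i))^beta and a_i = exp (- beta f_i).
   Pointwise, concavity of t |-> t^beta and the bound sum_i w_i x_i <= max_i x_i give
   sum_i w_i a_i <= e <= sum_i a_i <= e / w_min. Integrating, Z_beta <= int e <= n Z_beta,
   so the components q_i = a_i / Z_beta and p = e / int e satisfy sum_i q_i <= c p and
   p <= kappa sum_i q_i with c kappa = 1 / w_min, and c w_min^2 / 2 <= 1/2 since
   n w_min <= 1. If p (supp g) <= w_min^2 / 2, every q_i gives supp g mass at most 1/2,
   so (int g q_i)^2 <= (int g^2 q_i) / 2 by Cauchy-Schwarz (obtained by optimising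
   |g| <= g^2 / (2 s) + s / 2 over s > 0), and the Poincare inequality
   for q_i yields int g^2 q_i <= 2 C E_{q_i}(g). Summing over i,
   Var_p g <= int g^2 p <= kappa sum_i int g^2 q_i <= 2 C kappa sum_i E_{q_i}(g)
   <= 2 C kappa c E_p(g). *)

Lemma le_ereal_supD (R : realType) (A B : set \bar R) (M : \bar R) :
  A 0%E -> B 0%E -> (forall a b, A a -> B b -> (a + b <= M)%E) ->
  (ereal_sup A + ereal_sup B <= M)%E.
Proof.
move=> A0 B0 AB; have M0 : (0 <= M)%E by rewrite -(adde0 0%E) AB.
have [->|My] := eqVneq M +oo%E; first by rewrite leey.
have supB_le : (ereal_sup B <= M)%E.
  by apply: ge_ereal_sup => b Bb; rewrite -[b]add0e AB.
have supB_fin : ereal_sup B \is a fin_num.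
  by rewrite ge0_fin_numE ?(le_lt_trans supB_le) ?ltey//; exact: ereal_sup_ubound.
rewrite -leeBrDr//; apply: ge_ereal_sup => a Aa.
have [->|a_ninfty] := eqVneq a -oo%E; first by rewrite leNye.
have a_fin : a \is a fin_num.
  by rewrite fin_numE a_ninfty -ltey (le_lt_trans _ (_ : M < +oo)%E) ?ltey// -[a]adde0 AB.
rewrite leeBrDr// addeC -leeBrDr//; apply: ge_ereal_sup => b Bb.
by rewrite leeBrDr// addeC AB.
Qed.

(* Monotonicity, homogeneity and superadditivity of the nonnegative integral hold for
   arbitrary integrands; they are needed for the energy, whose integrand involves the
   gradient of a merely locally Lipschitz function and is not known to be measurable. *)
Section ge0_integral_nomeas.
Context d (T : measurableType d) (R : realType).
Variables (mu : {measure set T -> \bar R}) (D : set T).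
Local Open Scope ereal_scope.
Import HBNNSimple.

Lemma ge0_le_integral_nomeas (f g : T -> \bar R) :
  (forall x, D x -> 0 <= f x) -> (forall x, D x -> f x <= g x) ->
  \int[mu]_(x in D) f x <= \int[mu]_(x in D) g x.
Proof.
move=> f0 fg; have g0 x : D x -> 0 <= g x by move=> Dx; exact: le_trans (f0 x Dx) (fg x Dx).
rewrite !ge0_integralE//; apply: ereal_sup_le => _ [h hf <-]; exists h => // x.
apply: le_trans (hf x) _; rewrite !patchE; case: ifPn => // /set_mem; exact: fg.
Qed.

Lemma ge0_integralZl_nomeas (k : R) (f : T -> \bar R) : (0 < k)%R ->
  (forall x, D x -> 0 <= f x) ->
  \int[mu]_(x in D) (k%:E * f x) = k%:E * \int[mu]_(x in D) f x.
Proof.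
suff le_scale (c : R) (h : T -> \bar R) : (0 < c)%R -> (forall x, D x -> 0 <= h x) ->
    \int[mu]_(x in D) (c%:E * h x) <= c%:E * \int[mu]_(x in D) h x.
  move=> k0 f0; apply/eqP; rewrite eq_le le_scale//= -lee_pdivlMl//.
  have kf0 x : D x -> 0 <= k%:E * f x by move=> Dx; rewrite mule_ge0 ?f0// lee_fin ltW.
  apply: le_trans (le_scale _ _ _ kf0); last by rewrite invr_gt0.
  by under [leRHS]eq_integral do rewrite muleA -EFinM mulVf ?gt_eqF// mul1e.
move=> c0 h0; have ic0 : (0 <= c^-1)%R by rewrite invr_ge0 ltW.
have ch0 x : D x -> 0 <= c%:E * h x by move=> Dx; rewrite mule_ge0 ?h0// lee_fin ltW.
rewrite !ge0_integralE//; apply: ge_ereal_sup => _ [s sle <-].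
rewrite -lee_pdivrMl// -sintegralrM.
apply: ereal_sup_ubound; exists (scale_nnsfun s ic0) => //= x.
rewrite EFinM lee_pdivrMl//; apply: le_trans (sle x) _.
by rewrite !patchE; case: ifPn => _; rewrite ?mule0.
Qed.

Lemma ge0_integralD_nomeas (f g : T -> \bar R) :
  (forall x, D x -> 0 <= f x) -> (forall x, D x -> 0 <= g x) ->
  \int[mu]_(x in D) f x + \int[mu]_(x in D) g x <= \int[mu]_(x in D) (f x + g x).
Proof.
move=> f0 g0; have fg0 x : D x -> 0 <= f x + g x by move=> Dx; rewrite adde_ge0 ?f0 ?g0.
rewrite !ge0_integralE//; apply: le_ereal_supD.
- by exists nnsfun0; [exact: erestrict_ge0 | exact: sintegral0].
- by exists nnsfun0; [exact: erestrict_ge0 | exact: sintegral0].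
move=> _ _ [h1 h1f <-] [h2 h2g <-]; rewrite -sintegralD.
apply: ereal_sup_ubound; exists (add_nnsfun h1 h2) => // x.
by rewrite erestrictD /= EFinD leeD.
Qed.

Lemma ge0_integral_sum_nomeas (I : Type) (s : seq I) (f : I -> T -> \bar R) :
  (forall i x, D x -> 0 <= f i x) ->
  \sum_(i <- s) \int[mu]_(x in D) f i x <= \int[mu]_(x in D) (\sum_(i <- s) f i x).
Proof.
move=> f0; elim: s => [|i s IHs].
  by rewrite big_nil; apply: integral_ge0 => x _; rewrite big_nil.
rewrite big_cons.
have -> : \int[mu]_(x in D) (\sum_(j <- i :: s) f j x) =
          \int[mu]_(x in D) (f i x + \sum_(j <- s) f j x).
  by apply: eq_integral => x _; rewrite big_cons.
apply: le_trans (ge0_integralD_nomeas (f0 i) _) => [|x Dx]; first exact: leeD.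
by apply: sume_ge0 => j _; exact: f0.
Qed.
End ge0_integral_nomeas.

Lemma le_abs_amgm (R : realType) (x s : R) : 0 < s -> `|x| <= (2 * s)^-1 * x ^+ 2 + s / 2.
Proof.
move=> s0; rewrite -subr_ge0.
have -> : (2 * s)^-1 * x ^+ 2 + s / 2 - `|x| = (2 * s)^-1 * (`|x| - s) ^+ 2.
  by rewrite -[x ^+ 2]real_normK ?num_real//; field; rewrite gt_eqF.
by rewrite mulr_ge0 ?sqr_ge0// invr_ge0 mulr_ge0// ltW.
Qed.

Lemma sqr_le_of_amgm_bound (R : realType) (a b : R) : 0 <= a -> 0 <= b ->
  (forall s, 0 < s -> b <= a / (2 * s) + s / 4) -> b ^+ 2 <= a / 2.
Proof.
move=> a0 b0 bnd; have [a_eq0|a_neq0] := eqVneq a 0.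
  rewrite {}a_eq0 in bnd *.
  suff -> : b = 0 by rewrite expr0n mul0r.
  apply/le_anti; rewrite b0 andbT; apply/ler_addgt0Pr => e e0; rewrite add0r.
  by have := bnd (4 * e); rewrite mul0r add0r mulrC mulfK ?pnatr_eq0//; apply; rewrite mulr_gt0.
have a_gt0 : 0 < a by rewrite lt_def a_neq0 a0.
(* the bound at its minimiser s = sqrt (2 a) *)
pose s := Num.sqrt (2 * a); have s0 : 0 < s by rewrite sqrtr_gt0 mulr_gt0.
have s2 : s ^+ 2 = 2 * a by rewrite sqr_sqrtr// mulr_ge0.
have : b <= s / 2.
  have -> : s / 2 = a / (2 * s) + s / 4.
    have -> : a = s ^+ 2 / 2 by rewrite s2 mulrC mulKf// pnatr_eq0.
    by field; rewrite gt_eqF.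
  exact: bnd.
move=> b_le; have : b ^+ 2 <= (s / 2) ^+ 2 by rewrite lerXn2r // ?nnegrE ?divr_ge0 // ltW.
by rewrite expr_div_n s2 (_ : 2 * a / 2 ^+ 2 = a / 2)//; field.
Qed.

Section first_moment.
Context d (T : measurableType d) (R : realType).
Variables (mu : {measure set T -> \bar R}) (q g : T -> R) (S : set T).
Hypotheses (mq : measurable_fun setT q) (mg : measurable_fun setT g) (mS : measurable S).
Hypotheses (q0 : forall x, 0 <= q x) (gS : forall x, g x != 0 -> S x).
Local Open Scope ereal_scope.

Lemma integral_abs_mul_le (s : R) : (0 < s)%R ->
  \int[mu]_x (`|g x| * q x)%:E <=
  ((2 * s)^-1)%:E * \int[mu]_x (g x ^+ 2 * q x)%:E + (s / 2)%:E * \int[mu]_(x in S) (q x)%:E.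
Proof.
move=> s0; have s20 : (0 < (2 * s)^-1)%R by rewrite invr_gt0 mulr_gt0.
have g2q0 x : 0 <= (g x ^+ 2 * q x)%:E by rewrite lee_fin mulr_ge0 ?sqr_ge0.
have qS0 x : 0 <= ((EFin \o q) \_ S) x by apply: erestrict_ge0 => y _; rewrite lee_fin.
have mqS : measurable_fun setT ((EFin \o q) \_ S : T -> \bar R).
  by apply/(measurable_restrictT _ _).1 => //; apply/measurable_EFinP; exact: measurable_funS mq.
rewrite [X in _ + _ * X]integral_mkcond -!ge0_integralZl_nomeas ?divr_gt0//.
rewrite -ge0_integralD//; first last.
- by apply: measurable_funeM.
- by move=> x _; rewrite mule_ge0// lee_fin divr_ge0// ltW.
- apply/measurable_EFinP; apply: measurable_funM; first exact: measurable_cst.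
  by apply: measurable_funM => //; exact: measurable_funX.
- by move=> x _; rewrite mule_ge0// lee_fin ltW.
apply: ge0_le_integral_nomeas => x _; first by rewrite lee_fin mulr_ge0.
rewrite patchE; case: ifPn => [/set_mem Sx|nSx]; last first.
  have -> : g x = 0%R by apply/eqP; apply: contraNT nSx => /gS; rewrite inE.
  by rewrite normr0 mul0r expr0n mul0r mule0 add0e mule0.
rewrite -!EFinM -EFinD lee_fin mulrA -mulrDl ler_wpM2r//; exact: le_abs_amgm.
Qed.

Lemma sqr_integral_le_half :
  \int[mu]_x (g x ^+ 2 * q x)%:E < +oo -> \int[mu]_(x in S) (q x)%:E <= (2^-1)%:E ->
  (\int[mu]_x (g x * q x)%:E) ^+ 2 <= (2^-1)%:E * \int[mu]_x (g x ^+ 2 * q x)%:E.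
Proof.
set A := \int[mu]_x _; set B := \int[mu]_x _ => A_lt mass.
have A_fin : A \is a fin_num.
  by rewrite ge0_fin_numE//; apply: integral_ge0 => x _; rewrite lee_fin mulr_ge0 ?sqr_ge0.
have Aa : A = (fine A)%:E by rewrite fineK.
have B_le s : (0 < s)%R -> `|B| <= (fine A / (2 * s) + s / 4)%:E.
  move=> s0; apply: le_trans (le_abse_integral mu measurableT _) _.
    by apply/measurable_EFinP; exact: measurable_funM.
  under eq_integral do rewrite /= normrM (ger0_norm (q0 _)).
  apply: le_trans (integral_abs_mul_le s0) _; rewrite -/A [in leLHS]Aa -EFinM EFinD.
  apply: leeD; first by rewrite lee_fin mulrC.
  apply: le_trans (lee_wpmul2l _ mass) _; first by rewrite lee_fin divr_ge0// ltW.
  by rewrite -EFinM lee_fin; lra.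
have B_fin : B \is a fin_num.
  by rewrite fin_num_abs (le_lt_trans (B_le _ ltr01)) ?ltey.
have a0 : (0 <= fine A)%R.
  by rewrite fine_ge0// integral_ge0// => x _; rewrite lee_fin mulr_ge0 ?sqr_ge0.
have b2 : (`|fine B| ^+ 2 <= fine A / 2)%R.
  apply: sqr_le_of_amgm_bound => // s s0.
  by rewrite -lee_fin -abse_EFin fineK//; exact: B_le.
by rewrite -(fineK B_fin) Aa -EFin_expe -EFinM lee_fin mulrC -real_normK ?num_real.
Qed.

Lemma second_moment_le_of_poincare (C : R) (E : \bar R) : (0 < C)%R ->
  \int[mu]_x (g x ^+ 2 * q x)%:E < +oo -> \int[mu]_(x in S) (q x)%:E <= (2^-1)%:E ->
  (C^-1)%:E * (\int[mu]_x (g x ^+ 2 * q x)%:E - (\int[mu]_x (g x * q x)%:E) ^+ 2) <= E ->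
  \int[mu]_x (g x ^+ 2 * q x)%:E <= (2 * C)%:E * E.
Proof.
move=> C0 A_lt mass; have B2 := sqr_integral_le_half A_lt mass.
set A := \int[mu]_x _ in A_lt B2 *; set B := \int[mu]_x _ in B2 * => var_le.
have A_fin : A \is a fin_num.
  by rewrite ge0_fin_numE//; apply: integral_ge0 => x _; rewrite lee_fin mulr_ge0 ?sqr_ge0.
have Aa : A = (fine A)%:E by rewrite fineK.
have half : (fine A / 2)%:E <= A - B ^+ 2.
  by apply: le_trans (leeB (lexx A) B2); rewrite {2 3}Aa -EFinM -EFinB lee_fin; lra.
rewrite -lee_pdivrMl ?mulr_gt0//; apply: le_trans var_le.
apply: le_trans (lee_wpmul2l _ half); last by rewrite lee_fin invr_ge0 ltW.
by rewrite {1}Aa -EFinM lee_fin invfM; lra.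
Qed.
End first_moment.

Lemma expR_mul_le_convex (R : realType) (b y : R) : 0 <= b <= 1 ->
  expR (b * y) <= b * expR y + (1 - b).
Proof.
case/andP=> b0 b1; have := convex_expR (Itv01 b0 b1) y 0.
by rewrite !convRE /= mulr0 addr0 expR0 mulr1.
Qed.

Section mixture_bounds.
Variables (R : realType) (I : finType) (w u : I -> R).
Hypotheses (w_gt0 : forall i, 0 < w i) (w_sum1 : \sum_i w i = 1).

Let mix := \sum_i w i * expR (- u i).

Let index_witness : exists i : I, true.
Proof.
case: (pickP (fun _ : I => true)) => [i _|none]; first by exists i.
by move: w_sum1; rewrite big_pred0// => /eqP; rewrite eq_sym oner_eq0.
Qed.

Lemma mixture_gt0 : 0 < mix.
Proof.
have [i0 _] := index_witness; rewrite /mix (bigD1 i0)//= ltr_wpDr ?mulr_gt0 ?expR_gt0//.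
by apply: sumr_ge0 => i _; rewrite mulr_ge0 ?expR_ge0 ?ltW.
Qed.

Lemma expR_ln_mixture_le_sum (b : R) : 0 <= b ->
  expR (b * ln mix) <= \sum_i expR (- (b * u i)).
Proof.
move=> b0; have [/existsP[k mix_le]|/existsPn all_lt] := boolP [exists k, mix <= expR (- u k)].
  apply: le_trans (_ : expR (- (b * u k)) <= _); last first.
    by rewrite (bigD1 k)//= lerDl sumr_ge0// => i _; rewrite expR_ge0.
  rewrite ler_expR -mulrN ler_wpM2l// -[leRHS]expRK ler_ln ?posrE ?expR_gt0//.
  exact: mixture_gt0.
(* otherwise mix, a convex combination of the expR (- u k), would exceed itself *)
have [i0 _] := index_witness; have : mix < \sum_i w i * mix.
  rewrite /mix [ltLHS]big_mkcond [ltRHS]big_mkcond /=.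
  apply: ltr_sum; first by apply/hasP; exists i0; rewrite ?mem_index_enum.
  by move=> i _; rewrite ltr_pM2l// ltNge all_lt.
by rewrite -mulr_suml w_sum1 mul1r ltxx.
Qed.

Lemma weighted_sum_le_expR_ln_mixture (b : R) : 0 <= b <= 1 ->
  \sum_i w i * expR (- (b * u i)) <= expR (b * ln mix).
Proof.
move=> b01; have mix0 := mixture_gt0; set E := expR (b * ln mix).
(* concavity: each term is at most E times a convex combination of expR (- u i) / mix and 1 *)
have le_term i : expR (- (b * u i)) <= E * (b * (expR (- u i) / mix) + (1 - b)).
  have -> : - (b * u i) = b * ln mix + b * (- u i - ln mix) by ring.
  rewrite expRD ler_wpM2l ?expR_ge0//; apply: le_trans (expR_mul_le_convex _ b01) _.
  by rewrite expRD !expRN lnK ?posrE.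
apply: le_trans (_ : \sum_i w i * (E * (b * (expR (- u i) / mix) + (1 - b))) <= _).
  by apply: ler_sum => i _; apply: ler_wpM2l; [exact: ltW | exact: le_term].
have -> : \sum_i w i * (E * (b * (expR (- u i) / mix) + (1 - b))) =
    E * (b / mix * mix + (1 - b) * \sum_i w i).
  rewrite {2}/mix mulr_sumr mulr_sumr mulrDr !mulr_sumr -big_split /=.
  by apply: eq_bigr => i _; ring.
by rewrite w_sum1 mulfVK ?gt_eqF// mulr1 addrC subrK mulr1.
Qed.

Lemma sum_le_expR_ln_mixture (b wm : R) : 0 <= b <= 1 -> 0 < wm -> (forall i, wm <= w i) ->
  \sum_i expR (- (b * u i)) <= wm^-1 * expR (b * ln mix).
Proof.
move=> b01 wm0 wm_le; apply: le_trans (_ : wm^-1 * \sum_i w i * expR (- (b * u i)) <= _).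
  rewrite mulr_sumr; apply: ler_sum => i _.
  by rewrite mulrA ler_peMl ?expR_ge0// ler_pdivlMl// mulr1.
by apply: ler_wpM2l; [rewrite invr_ge0 ltW | exact: weighted_sum_le_expR_ln_mixture].
Qed.
End mixture_bounds.

Lemma continuous_measurable_fun_Rd (R : realType) d (h : 'rV[R]_d -> R) :
  continuous h -> measurable_fun setT (h : Rd R d -> R).
Proof.
move=> /continuousP h_cont; apply: (measurability _ (RGenOpens.measurableE R)).
move=> _ [_ [a [b ->] <-]]; rewrite setTI; apply: sub_sigma_algebra.
exact/h_cont/interval_open.
Qed.

Lemma locally_lipschitz_continuous (R : realType) d (g : 'rV[R]_d -> R) :
  locally_lipschitz g -> continuous g.
Proof.
move=> g_ll x; have [r [L [r0 lip]]] := g_ll x.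
apply/(cvgrPdist_le (FF := nbhs_filter x)) => e e0.
apply/nbhs_ballP; exists (Num.min r (e / (`|L| + 1))); first by rewrite /= lt_min r0 divr_gt0.
move=> y; rewrite -ball_normE /ball_ /= lt_min => /andP[yr ye].
apply: le_trans (lip _ _ (ballxx _ r0) _) _; first by rewrite -ball_normE.
apply: le_trans (_ : (`|L| + 1) * `|x - y| <= _).
  by rewrite ler_wpM2r// (le_trans (ler_norm _))// lerDl.
by rewrite -ler_pdivlMl// mulrC ltW.
Qed.

Lemma measurable_supp (R : realType) d (g : 'rV[R]_d -> R) : measurable (supp g).
Proof.
rewrite -[supp g]setCK; apply: measurableC; apply: sub_sigma_algebra.
exact/closed_openC/closed_closure.
Qed.

Section poincare_from_components.
Variables (R : realType) (d : nat) (lam : {measure set (Rd R d) -> \bar R}).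
Variables (I : finType) (q : I -> 'rV[R]_d -> R) (p : 'rV[R]_d -> R) (C c kappa m : R).
Hypotheses (mq : forall i, measurable_fun setT (q i : Rd R d -> R)).
Hypotheses (q0 : forall i x, 0 <= q i x) (p0 : forall x, 0 <= p x).
Hypotheses (C0 : 0 < C) (c0 : 0 < c) (kappa0 : 0 < kappa).
Hypotheses (sum_q_le : forall x, \sum_i q i x <= c * p x).
Hypotheses (p_le : forall x, p x <= kappa * \sum_i q i x).
Hypotheses (q_poincare : forall i, poincare lam (q i) C) (cm : c * m <= 2^-1).
Local Open Scope ereal_scope.

Let q_le i x : (q i x <= c * p x)%R.
Proof.
apply: le_trans (sum_q_le x); rewrite (bigD1 i)//= lerDl.
by apply: sumr_ge0 => j _; exact: q0.
Qed.

Section fixed_function.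
Variable g : 'rV[R]_d -> R.
Hypotheses (g_ll : locally_lipschitz g).
Hypotheses (g2p_lt : \int[lam]_x (g x ^+ 2 * p x)%:E < +oo).
Hypotheses (mass : dmeasure lam p (supp g) <= m%:E).

Lemma component_mass_le i : \int[lam]_(x in supp g) (q i x)%:E <= (2^-1)%:E.
Proof.
apply: le_trans (_ : \int[lam]_(x in supp g) (c%:E * (p x)%:E) <= _).
  by apply: ge0_le_integral_nomeas => x _; rewrite ?lee_fin// -EFinM lee_fin.
rewrite ge0_integralZl_nomeas// => [|x _]; last by rewrite lee_fin.
apply: le_trans (lee_wpmul2l _ mass) _; first by rewrite lee_fin ltW.
by rewrite -EFinM lee_fin.
Qed.

Lemma component_second_moment_le_scale i :
  \int[lam]_x (g x ^+ 2 * q i x)%:E <= c%:E * \int[lam]_x (g x ^+ 2 * p x)%:E.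
Proof.
rewrite -ge0_integralZl_nomeas// => [|x _]; last by rewrite lee_fin mulr_ge0 ?sqr_ge0.
apply: ge0_le_integral_nomeas => x _; first by rewrite lee_fin mulr_ge0 ?sqr_ge0.
by rewrite -EFinM lee_fin mulrCA ler_wpM2l ?sqr_ge0.
Qed.

Lemma component_second_moment_lt i : \int[lam]_x (g x ^+ 2 * q i x)%:E < +oo.
Proof.
apply: le_lt_trans (component_second_moment_le_scale i) _.
by rewrite lte_mul_pinfty// lee_fin ltW.
Qed.

Lemma component_second_moment_le i :
  \int[lam]_x (g x ^+ 2 * q i x)%:E <= (2 * C)%:E * energy lam (q i) g.
Proof.
have mg := continuous_measurable_fun_Rd (locally_lipschitz_continuous g_ll).
apply: (second_moment_le_of_poincare (S := supp g)) => //.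
- exact: measurable_supp.
- by move=> x gx; apply: subset_closure.
- exact: component_second_moment_lt.
- exact: component_mass_le.
- by apply: q_poincare; split; [|exact: component_second_moment_lt].
Qed.

Lemma sum_component_energy_le : \sum_i energy lam (q i) g <= c%:E * energy lam p g.
Proof.
have G0 x : (0 <= grad_norm2 g x)%R by apply: sumr_ge0 => i _; exact: sqr_ge0.
apply: le_trans (ge0_integral_sum_nomeas _ _ _) _ => [i x _|].
  by rewrite lee_fin mulr_ge0.
rewrite -ge0_integralZl_nomeas// => [|x _]; last by rewrite lee_fin mulr_ge0.
apply: ge0_le_integral_nomeas => x _; first by rewrite sume_ge0// => i _; rewrite lee_fin mulr_ge0.
by rewrite sumEFin -EFinM lee_fin -mulr_sumr mulrCA ler_wpM2l.
Qed.

Lemma second_moment_le_sum_components :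
  \int[lam]_x (g x ^+ 2 * p x)%:E <= kappa%:E * \sum_i \int[lam]_x (g x ^+ 2 * q i x)%:E.
Proof.
have mg := continuous_measurable_fun_Rd (locally_lipschitz_continuous g_ll).
rewrite -ge0_integral_sum//; first last.
- by move=> i x _; rewrite lee_fin mulr_ge0 ?sqr_ge0.
- move=> i; apply/measurable_EFinP; apply: measurable_funM => //.
  exact: measurable_funX.
rewrite -ge0_integralZl_nomeas// => [|x _]; last by rewrite sume_ge0// => i _; rewrite lee_fin mulr_ge0 ?sqr_ge0.
apply: ge0_le_integral_nomeas => x _; first by rewrite lee_fin mulr_ge0 ?sqr_ge0.
by rewrite sumEFin -EFinM lee_fin -mulr_sumr mulrCA ler_wpM2l ?sqr_ge0.
Qed.
End fixed_function.

Theorem poincare_small_sets_of_components :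
  poincare_small_sets lam p (2 * C * (c * kappa)) m.
Proof.
move=> g [g_ll g2p_lt] mass.
have var_le : Defs.variance lam p g <= \int[lam]_x (g x ^+ 2 * p x)%:E.
  by rewrite /Defs.variance -[leRHS]sube0 leeB// sqre_ge0.
have moment_le : \int[lam]_x (g x ^+ 2 * p x)%:E <= (2 * C * (c * kappa))%:E * energy lam p g.
  apply: le_trans (second_moment_le_sum_components g_ll) _.
  have sum_le : \sum_i \int[lam]_x (g x ^+ 2 * q i x)%:E <=
      \sum_i (2 * C)%:E * energy lam (q i) g.
    by apply: lee_sum => i _; exact: component_second_moment_le.
  apply: le_trans (lee_wpmul2l _ sum_le) _; first by rewrite lee_fin ltW.
  rewrite -ge0_sume_distrr => [|i _]; last first.
    by apply: integral_ge0 => x _; rewrite lee_fin mulr_ge0// sumr_ge0// => j _; exact: sqr_ge0.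
  rewrite muleA -EFinM.
  apply: le_trans (lee_wpmul2l _ (sum_component_energy_le g)) _; first by rewrite lee_fin ltW// !mulr_gt0.
  by rewrite muleA -EFinM (_ : kappa * (2 * C) * c = 2 * C * (c * kappa))%R//; ring.
have K0 : (0 < 2 * C * (c * kappa))%R by rewrite !mulr_gt0.
apply: le_trans (lee_wpmul2l _ var_le) _; first by rewrite lee_fin invr_ge0 ltW.
by rewrite lee_pdivrMl.
Qed.
End poincare_from_components.

Lemma poincare_small_sets_normalized_mixture (R : realType) (d : nat)
    (lam : {measure set (Rd R d) -> \bar R}) (I : finType)
    (a : I -> 'rV[R]_d -> R) (e : 'rV[R]_d -> R) (Za Ze C k m : R) :
  (forall i, measurable_fun setT (a i : Rd R d -> R)) ->
  (forall i x, 0 <= a i x) -> (forall x, 0 <= e x) ->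
  0 < Za -> 0 < Ze -> 0 < C -> 0 < k ->
  (forall x, e x <= \sum_i a i x) -> (forall x, \sum_i a i x <= k * e x) ->
  (forall i, poincare lam (fun x => a i x / Za) C) -> k * Ze * m <= Za / 2 ->
  poincare_small_sets lam (fun x => e x / Ze) (2 * C * k) m.
Proof.
move=> ma a0 e0 Za0 Ze0 C0 k0 e_le sum_le a_poincare mass_le.
have -> : 2 * C * k = 2 * C * (k * Ze / Za * (Za / Ze)) by field; rewrite !gt_eqF.
apply: (poincare_small_sets_of_components (q := fun i x => a i x / Za)) => //.
- by move=> i; apply: measurable_funM => //; exact: measurable_cst.
- by move=> i x; rewrite divr_ge0// ltW.
- by move=> x; rewrite divr_ge0// ltW.
- by rewrite !divr_gt0 ?mulr_gt0.
- by rewrite divr_gt0.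
- move=> x; rewrite -mulr_suml (_ : _ * (e x / Ze) = k * e x / Za); last by field; rewrite !gt_eqF.
  by rewrite ler_pM2r ?invr_gt0.
- move=> x; rewrite -mulr_suml (_ : Za / Ze * _ = (\sum_i a i x) / Ze); last by field; rewrite !gt_eqF.
  by rewrite ler_pM2r ?invr_gt0.
- by rewrite mulrAC ler_pdivrMr// [leRHS]mulrC.
Qed.

Lemma integral_sum_EFin d (T : measurableType d) (R : realType)
    (mu : {measure set T -> \bar R}) (I : finType) (F : I -> T -> R) :
  (forall i, measurable_fun setT (F i)) -> (forall i x, 0 <= F i x) ->
  (\int[mu]_x (\sum_i F i x)%:E = \sum_i \int[mu]_x (F i x)%:E)%E.
Proof.
move=> mF F0; under eq_integral do rewrite -sumEFin.
by rewrite ge0_integral_sum// => [i|i x _]; [exact/measurable_EFinP | rewrite lee_fin].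
Qed.

Lemma mixture_normalizer_bounds d (T : measurableType d) (R : realType)
    (mu : {measure set T -> \bar R}) (I : finType) (w : I -> R) (a : I -> T -> R)
    (e : T -> R) (Z : R) :
  (forall i, measurable_fun setT (a i)) -> (forall i x, 0 <= a i x) ->
  (forall i, 0 < w i) -> \sum_i w i = 1 ->
  (forall i, \int[mu]_x (a i x)%:E = Z%:E)%E ->
  (forall x, \sum_i w i * a i x <= e x) -> (forall x, e x <= \sum_i a i x) ->
  (Z%:E <= \int[mu]_x (e x)%:E <= (#|I|%:R * Z)%:E)%E.
Proof.
move=> ma a0 w0 w_sum1 Za e_ge e_le.
have wa0 i x : 0 <= w i * a i x by rewrite mulr_ge0 ?a0// ltW.
apply/andP; split.
  apply: (@le_trans _ _ (\int[mu]_x (\sum_i w i * a i x)%:E)%E).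
    rewrite (@integral_sum_EFin _ _ _ mu _ (fun i x => w i * a i x))// => [|i].
      have wZ i : (\int[mu]_x (w i * a i x)%:E = (w i * Z)%:E)%E.
        under eq_integral do rewrite EFinM.
        by rewrite ge0_integralZl_nomeas ?Za ?EFinM// => x _; rewrite lee_fin.
      by under eq_bigr do rewrite wZ; rewrite sumEFin -mulr_suml w_sum1 mul1r.
    by apply: measurable_funM => //; exact: measurable_cst.
  by apply: ge0_le_integral_nomeas => x _; rewrite lee_fin// sumr_ge0.
apply: (@le_trans _ _ (\int[mu]_x (\sum_i a i x)%:E)%E).
  apply: ge0_le_integral_nomeas => x _; rewrite lee_fin// (le_trans _ (e_ge x))//.
  exact: sumr_ge0.
rewrite integral_sum_EFin//.
by under eq_bigr do rewrite Za; rewrite sumEFin sumr_const mulr_natl.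
Qed.

Lemma smooth_continuous (R : realType) d (f : 'rV[R]_d -> R) : smooth f -> continuous f.
Proof. by move=> f_smooth x; apply: differentiable_continuous; exact: (f_smooth [::]). Qed.

Lemma measurable_fun_expR_scale (R : realType) d (f : 'rV[R]_d -> R) (b : R) :
  continuous f -> measurable_fun setT ((fun x => expR (- (b * f x))) : Rd R d -> R).
Proof.
move=> f_cont; apply: continuous_measurable_fun_Rd => x.
apply: continuous_comp; last exact: continuous_expR.
by apply: (cvgN (FF := nbhs_filter x)); apply: (cvgM (FF := nbhs_filter x)); [exact: cvg_cst | exact: f_cont].
Qed.

Lemma poincare_small_sets_density0 (R : realType) d
    (lam : {measure set (Rd R d) -> \bar R}) (p : 'rV[R]_d -> R) (C m : R) :
  (forall x, p x = 0) -> poincare_small_sets lam p C m.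
Proof.
move=> p0 g _ _; have -> : p = fun=> 0 by apply/funext.
rewrite /Defs.variance !integral0_eq => [|x _|x _]; rewrite ?mulr0//.
by rewrite expe2 mule0 sube0 mule0; apply: integral_ge0 => x _; rewrite mulr0.
Qed.


Lemma wmin_le (R : realType) n (w : 'I_n -> R) i : wmin w <= w i.
Proof. by rewrite /wmin (bigD1 i)//= ge_min lexx. Qed.

Lemma wmin_gt0 (R : realType) n (w : 'I_n -> R) : (forall i, 0 < w i) -> 0 < wmin w.
Proof.
move=> w_gt0; apply: (big_ind (fun x => 0 < x)) => // x y x0 y0.
by rewrite lt_min x0 y0.
Qed.

Lemma natr_mul_wmin_le1 (R : realType) n (w : 'I_n -> R) :
  \sum_(i < n) w i = 1 -> n%:R * wmin w <= 1.
Proof.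
move=> w_sum1; rewrite mulr_natl -[n in _ *+ n]card_ord -sumr_const -[X in _ <= X]w_sum1.
by apply: ler_sum => i _; exact: wmin_le.
Qed.
Lemma poincare_small_sets_mixture (R : realType) (d : nat)
    (lam : {measure set (Rd R d) -> \bar R}) (I : finType) (w : I -> R)
    (a : I -> 'rV[R]_d -> R) (e : 'rV[R]_d -> R) (Zb C wm : R) :
  (forall i, measurable_fun setT (a i : Rd R d -> R)) -> (forall i x, 0 <= a i x) ->
  (forall i, 0 < w i) -> \sum_i w i = 1 -> 0 < C -> 0 < wm -> #|I|%:R * wm <= 1 ->
  (forall i, \int[lam]_x (a i x)%:E = Zb%:E)%E ->
  (forall x, \sum_i w i * a i x <= e x) -> (forall x, e x <= \sum_i a i x) ->
  (forall x, \sum_i a i x <= wm^-1 * e x) ->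
  (forall i, poincare lam (fun x => a i x / Zb) C) ->
  poincare_small_sets lam (fun x => e x / fine (\int[lam]_y (e y)%:E)%E)
    (2 * C / wm) (wm ^+ 2 / 2).
Proof.
move=> ma a0 w0 w_sum1 C0 wm0 card_wm Za e_ge e_le sum_le a_poincare.
have /andP[Z_ge Z_le] := mixture_normalizer_bounds ma a0 w0 w_sum1 Za e_ge e_le.
have e0 x : 0 <= e x.
  by apply: le_trans (e_ge x); apply: sumr_ge0 => i _; rewrite mulr_ge0 ?a0// ltW.
set Z := (\int[lam]_y (e y)%:E)%E in Z_ge Z_le *.
have [Zb_le0|Zb_gt0] := lerP Zb 0.
  (* then int e = 0 and p is the junk value e / 0 = 0 *)
  apply: poincare_small_sets_density0 => x.
  suff -> : Z = 0%E by rewrite invr0 mulr0.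
  apply/le_anti; rewrite integral_ge0 => [|y _]; last by rewrite lee_fin.
  by rewrite andbT (le_trans Z_le)// lee_fin mulr_ge0_le0.
have Z_fin : Z \is a fin_num.
  by rewrite ge0_fin_numE ?(le_lt_trans Z_le) ?ltey// (le_trans _ Z_ge)// lee_fin ltW.
have Z_gt0 : 0 < fine Z by rewrite -lte_fin fineK// (lt_le_trans _ Z_ge)// lte_fin.
have Z_le' : fine Z <= #|I|%:R * Zb by rewrite -lee_fin fineK.
apply: (poincare_small_sets_normalized_mixture (Za := Zb)); rewrite ?invr_gt0//.
rewrite (_ : _ * _ * _ = fine Z * wm / 2); last by field; rewrite gt_eqF.
nra.
Qed.

Theorem mainTheorem8 (R : realType) (d n : nat)
  (lam : {measure set (Rd R d) -> \bar R}) (Hlam : is_lebesgue lam)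
  (fs : 'I_n -> 'rV[R]_d -> R)
  (Hsmooth : forall i, smooth (fs i))
  (Hdens : forall i, (\int[lam]_x (expR (- fs i x))%:E = 1)%E)
  (Hint : forall i (b : R), 0 < b ->
     (\int[lam]_x (expR (- (b * fs i x)))%:E < +oo)%E)
  (w : 'I_n -> R) (Hwpos : forall i, 0 < w i) (Hwsum : \sum_(i < n) w i = 1)
  (beta : R) (Hbeta : 0 < beta <= 1)
  (Zbeta : R)
  (HZ : forall i, (\int[lam]_x (expR (- (beta * fs i x)))%:E = Zbeta%:E)%E)
  (Cbeta : R) (HC : 0 < Cbeta)
  (HP : forall i, poincare lam (fun x => expR (- (beta * fs i x)) / Zbeta) Cbeta) :
  poincare_small_sets lam
    (tempered_density lam (mixture_potential w fs) beta)
    (2 * Cbeta / wmin w) (wmin w ^+ 2 / 2).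
Proof.
have b01 : 0 <= beta <= 1 by case/andP: Hbeta => /ltW -> ->.
have wm0 := wmin_gt0 Hwpos.
have eE x : expR (- (beta * mixture_potential w fs x)) =
            expR (beta * ln (\sum_i w i * expR (- fs i x))) by rewrite mulrN opprK.
apply: (poincare_small_sets_mixture (e := fun x => expR (- (beta * mixture_potential w fs x)))
  (a := fun j x => expR (- (beta * fs j x)))) => //.
- by move=> j; exact: measurable_fun_expR_scale (smooth_continuous (Hsmooth j)).
- by rewrite card_ord; exact: natr_mul_wmin_le1.
- by move=> x; rewrite eE; apply: (weighted_sum_le_expR_ln_mixture _ Hwpos Hwsum).
- by move=> x; rewrite eE; apply: (expR_ln_mixture_le_sum _ Hwpos Hwsum); case/andP: b01.
- by move=> x; rewrite eE; apply: (sum_le_expR_ln_mixture _ Hwpos Hwsum) => // j; exact: wmin_le.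
Qed.
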